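(* Let $R$ be a $*$-ring. Then $R$ is strongly $J$-$*$-clean if and only if (1) $R$ is strongly $*$-clean, and (2) no nonzero idempotent of $R$ is the sum of two units of $R$.
   Context: All rings are associative with identity. A $*$-ring is a ring $R$ with an involution $*$, i.e. a map $a\mapsto a^*$ with $(a+b)^*=a^*+b^*$, $(ab)^*=b^*a^*$, $(a^* )^*=a$. $U(R)$ denotes the group of units and $J(R)$ the Jacobson radical of $R$. A projection is an element $e$ with $e^2=e=e^*$. $R$ is strongly $J$-$*$-clean if every $a\in R$ can be written $a=e+u$ with $e$ a projection, $u\in J(R)$ and $ae=ea$. $R$ is strongly $*$-clean if every $a\in R$ can be written $a=e+u$ with $e$ a projection, $u\in U(R)$ and $eu=ue$. *)

From mathcomp Require Import all_boot all_algebra.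
Set Implicit Arguments. Unset Strict Implicit. Unset Printing Implicit Defensive.
Import GRing.Theory.
Local Open Scope ring_scope.

Definition involution (R : pzRingType) (star : R -> R) : Prop :=
  [/\ forall a b, star (a + b) = star a + star b,
      forall a b, star (a * b) = star b * star a
    & forall a, star (star a) = a].

Definition is_unit (R : pzRingType) (u : R) : Prop :=
  exists v : R, u * v = 1 /\ v * u = 1.

(* Jacobson radical, via its standard elementwise description:
   a \in J(R) iff 1 - r a is invertible for every r. *)
Definition in_jacobson (R : pzRingType) (a : R) : Prop :=
  forall r : R, is_unit (1 - r * a).

Definition is_projection (R : pzRingType) (star : R -> R) (e : R) : Prop :=
  e * e = e /\ star e = e.

Definition strongly_J_star_clean (R : pzRingType) (star : R -> R) : Prop :=
  forall a : R, exists e u : R,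
    [/\ is_projection star e, in_jacobson u, a = e + u & a * e = e * a].

Definition strongly_star_clean (R : pzRingType) (star : R -> R) : Prop :=
  forall a : R, exists e u : R,
    [/\ is_projection star e, is_unit u, a = e + u & e * u = u * e].

Definition no_nonzero_idem_sum_two_units (R : pzRingType) : Prop :=
  forall e u v : R, e * e = e -> e != 0 -> is_unit u -> is_unit v -> e <> u + v.

(* If R is strongly J-*-clean, every unit lies in 1 + J(R) (its idempotent part
   is a unit, hence 1); in particular 2 is in J(R), so a sum of two units lies
   in J(R) and cannot be a nonzero idempotent.  Writing a = e + j as
   (1 - e) + ((2e - 1) + j) shows that R is strongly *-clean.
   Conversely, in a strongly *-clean ring every idempotent is a projection,
   and idempotent projections are central.  Given a, write a - 1 = e + u with
   u a unit; it suffices that u + 1 is in J(R).  If 1 - r(u + 1) = h + v with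
   h a nonzero idempotent, then in the corner hRh (h is central) both hu and
   h(u + 1) are units, so h = -(hu + 1 - h) + (h(u + 1) + 1 - h) is a sum of
   two units. *)

From mathcomp Require Import all_boot all_algebra.
Set Implicit Arguments. Unset Strict Implicit. Unset Printing Implicit Defensive.
Import GRing.Theory.
Local Open Scope ring_scope.

Section UnitsAndJacobson.
Variable R : pzRingType.
Implicit Types a b e u : R.

Lemma is_unitM a b : is_unit a -> is_unit b -> is_unit (a * b).
Proof.
move=> [a' [aa' a'a]] [b' [bb' b'b]]; exists (b' * a'); split.
  by rewrite mulrA -(mulrA a) bb' mulr1.
by rewrite mulrA -(mulrA b') a'a mulr1.
Qed.

Lemma is_unitN a : is_unit a -> is_unit (- a).
Proof. by move=> [a' [aa' a'a]]; exists (- a'); rewrite !mulrNN. Qed.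

Lemma is_unit_involutive a : a * a = 1 -> is_unit a.
Proof. by move=> aa; exists a. Qed.

Lemma is_unit_lcancel0 u a : is_unit u -> u * a = 0 -> a = 0.
Proof. by move=> [u' [_ u'u]] ua0; rewrite -[a]mul1r -u'u -mulrA ua0 mulr0. Qed.

Lemma idem_is_unit_eq1 e : e * e = e -> is_unit e -> e = 1.
Proof. by move=> ee [e' [ee' _]]; rewrite -[LHS]mulr1 -ee' mulrA ee. Qed.

Lemma in_jacobsonD a b : in_jacobson a -> in_jacobson b -> in_jacobson (a + b).
Proof.
move=> Ja Jb r; have [w [w1 _]] := Ja r.
have -> : 1 - r * (a + b) = (1 - r * a) * (1 - (w * r) * b).
  by rewrite mulrBr mulr1 !mulrA w1 mul1r mulrDr opprD addrA.
exact: is_unitM.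
Qed.

Lemma in_jacobsonMl s a : in_jacobson a -> in_jacobson (s * a).
Proof. by move=> Ja r; rewrite mulrA; apply: Ja. Qed.

Lemma in_jacobsonN a : in_jacobson a -> in_jacobson (- a).
Proof. by move=> Ja; rewrite -mulN1r; apply: in_jacobsonMl. Qed.

Lemma idem_in_jacobson_eq0 e : e * e = e -> in_jacobson e -> e = 0.
Proof.
move=> ee Je; apply: (is_unit_lcancel0 (Je 1)).
by rewrite mul1r mulrBl mul1r ee subrr.
Qed.

Lemma idemC e : e * e = e -> (1 - e) * (1 - e) = 1 - e.
Proof. by move=> ee; rewrite mulrBl mul1r mulrBr mulr1 ee subrr subr0. Qed.

Lemma idem_mul_compl0 e : e * e = e -> e * (1 - e) = 0 /\ (1 - e) * e = 0.
Proof. by move=> ee; rewrite mulrBr mulrBl mulr1 mul1r ee subrr. Qed.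

End UnitsAndJacobson.

Section Involution.
Variables (R : pzRingType) (star : R -> R).
Hypothesis star_inv : involution star.

Lemma star0 : star 0 = 0.
Proof.
case: star_inv => starD _ _.
by apply: (@addrI _ (star 0)); rewrite addr0 -starD addr0.
Qed.

Lemma starN (a : R) : star (- a) = - star a.
Proof.
case: star_inv => starD _ _.
by apply: (@addrI _ (star a)); rewrite subrr -star0 -starD subrr.
Qed.

Lemma star1 : star 1 = 1.
Proof.
case: star_inv => _ starM starK.
by have := starM (star 1) 1; rewrite mulr1 !starK mulr1.
Qed.

Lemma is_projectionC (e : R) :
  is_projection star e -> is_projection star (1 - e).
Proof.
case=> ee se; split; first exact: idemC.
by case: star_inv => starD _ _; rewrite starD starN se star1.
Qed.

Lemma star_clean_idem_projection :
  strongly_star_clean star -> forall e : R, e * e = e -> star e = e.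
Proof.
move=> clean e ee; have [p [u [[pp sp] Uu def_e pu]]] := clean e.
have ep : e * p = p * e by rewrite def_e mulrDl mulrDr pp pu.
have def_u : u = e - p by rewrite def_e addrC addKr.
have ep0 : e * p = 0.
  apply: (is_unit_lcancel0 Uu).
  by rewrite def_u mulrBl !mulrA ee -ep -mulrA pp subrr.
have e_compl : e + p - 1 = 0.
  apply: (is_unit_lcancel0 Uu).
  rewrite def_u mulrBl !mulrBr !mulrDr !mulr1 ee pp -ep ep0.
  by rewrite addr0 subrr addrK subrr.
have -> : e = 1 - p by apply/eqP; rewrite -subr_eq0 opprB addrA e_compl.
by case: (is_projectionC (conj pp sp)).
Qed.

Section ProjectionIdempotents.
Hypothesis idem_proj : forall e : R, e * e = e -> star e = e.

(* e + e r (1 - e) is again idempotent, so e r (1 - e) is self-adjoint. *)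
Lemma idem_projection_corner0 (e r : R) : e * e = e -> e * r * (1 - e) = 0.
Proof.
move=> ee; set x := e * r * (1 - e).
have xe : x * e = 0 by rewrite /x -mulrA (idem_mul_compl0 ee).2 mulr0.
have ex : e * x = x by rewrite /x !mulrA ee.
have xx : x * x = 0 by rewrite {2}/x !mulrA xe !mul0r.
have exe : (e + x) * (e + x) = e + x.
  by rewrite mulrDl !mulrDr ee ex xe xx !addr0.
case: star_inv => starD starM _.
have sx : star x = x.
  by move: (idem_proj exe); rewrite starD idem_proj // => /addrI.
by have := starM x e; rewrite xe star0 sx idem_proj // ex.
Qed.

Lemma idem_projection_central (e r : R) : e * e = e -> e * r = r * e.
Proof.
move=> ee; have := idem_projection_corner0 r ee.
have := idem_projection_corner0 r (idemC ee); rewrite subKr.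
rewrite mulrBr mulr1 !mulrBl mul1r -mulrA.
by move=> /eqP; rewrite subr_eq0 => /eqP <- /eqP; rewrite subr_eq0 => /eqP.
Qed.

End ProjectionIdempotents.

End Involution.

Section Abelian.
Variable R : pzRingType.
Hypothesis idem_central : forall e r : R, e * e = e -> e * r = r * e.

Lemma abelian_mulr_eq1_sym (a b : R) : a * b = 1 -> b * a = 1.
Proof.
move=> ab; have ba : (b * a) * (b * a) = b * a.
  by rewrite mulrA -(mulrA b) ab mulr1.
have def_a : a = b * a * a by rewrite (idem_central a ba) mulrA ab mul1r.
by rewrite -[b * a]mulr1 -ab mulrA -def_a.
Qed.

Lemma abelian_is_unit_linv (a b : R) : b * a = 1 -> is_unit a.
Proof. by move=> ba; exists b; split=> //; apply: abelian_mulr_eq1_sym. Qed.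

Lemma corner_mul (h a b : R) : h * h = h ->
  (h * a + (1 - h)) * (h * b + (1 - h)) = h * (a * b) + (1 - h).
Proof.
move=> hh; have [h0 h0'] := idem_mul_compl0 hh.
have t1 : h * a * (h * b) = h * (a * b).
  by rewrite -mulrA (mulrA a) -(idem_central a hh) !mulrA hh.
have t2 : h * a * (1 - h) = 0.
  by rewrite -mulrA -(idem_central a (idemC hh)) mulrA h0 mul0r.
have t3 : (1 - h) * (h * b) = 0 by rewrite mulrA h0' mul0r.
rewrite mulrDl (mulrDr (h * a)) (mulrDr (1 - h)) t1 t2 t3.
by rewrite idemC // addr0 add0r.
Qed.

Lemma corner_is_unit (h u : R) :
  h * h = h -> is_unit u -> is_unit (h * u + (1 - h)).
Proof.
move=> hh [u' [uu' u'u]]; exists (h * u' + (1 - h)).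
by rewrite !corner_mul // uu' u'u mulr1 addrC subrK.
Qed.

Lemma unit_addr1_in_jacobson (star : R -> R) :
  strongly_star_clean star -> no_nonzero_idem_sum_two_units R ->
  forall u : R, is_unit u -> in_jacobson (u + 1).
Proof.
move=> clean no_idem u Uu r; set w := u + 1.
have [h [v [[hh _] Uv def_h _]]] := clean (1 - r * w).
suff h0 : h = 0 by rewrite def_h h0 add0r.
apply/eqP; apply: contraT => hN0.
have hrw : h * (r * w) = h * (- v).
  move: (congr1 (GRing.mul h) def_h).
  by rewrite mulrBr mulr1 (mulrDr h h) hh mulrN => /addrI <-; rewrite opprK.
have [v' [_ v'v]] := Uv.
have Uhw : is_unit (h * w + (1 - h)).
  apply: (@abelian_is_unit_linv _ ((h * (- v') + (1 - h)) * (h * r + (1 - h)))).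
  rewrite -mulrA [X in _ * X]corner_mul // hrw corner_mul //.
  by rewrite mulrNN v'v mulr1 addrC subrK.
case: (no_idem h (- (h * u + (1 - h))) (h * w + (1 - h)) hh hN0
        (is_unitN (corner_is_unit hh Uu)) Uhw).
by rewrite /w mulrDr mulr1 opprD addrACA addKr addNr addr0.
Qed.

End Abelian.

Section JStarClean.
Variables (R : pzRingType) (star : R -> R).
Hypothesis star_inv : involution star.
Hypothesis Jclean : strongly_J_star_clean star.

Lemma J_star_clean_star_clean : strongly_star_clean star.
Proof.
move=> a; have [e [j [[ee se] Jj def_a ae]]] := Jclean a.
have [e0 e0'] := idem_mul_compl0 ee.
exists (1 - e), (a - (1 - e)); split.
- exact: is_projectionC.
- set s := e - (1 - e).
  have ss : s * s = 1.
    rewrite /s mulrBl (mulrBr e) (mulrBr (1 - e)) ee e0 e0' idemC //.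
    by rewrite subr0 sub0r opprK addrC subrK.
  have -> : a - (1 - e) = s * (1 - (- s) * j).
    by rewrite mulrBr mulr1 mulNr mulrN opprK mulrA ss mul1r def_a /s addrAC.
  exact: is_unitM (is_unit_involutive ss) (Jj _).
- by rewrite addrC subrK.
- by rewrite mulrBr mulrBl [a * _]mulrBr [_ * a]mulrBl mulr1 mul1r ae.
Qed.

Lemma J_star_clean_unit_subr1 (w : R) : is_unit w -> in_jacobson (w - 1).
Proof.
move=> Uw; have [e [j [[ee _] Jj def_w _]]] := Jclean w.
have [w' [ww' _]] := Uw.
have Ue : is_unit e.
  have -> : e = w * (1 - w' * j).
    by rewrite mulrBr mulr1 mulrA ww' mul1r def_w addrK.
  exact: is_unitM (Jj _).
by rewrite def_w (idem_is_unit_eq1 ee Ue) addrC addKr.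
Qed.

Lemma J_star_clean_no_idem_sum_two_units : no_nonzero_idem_sum_two_units R.
Proof.
move=> f u v ff fN0 Uu Uv def_f; move/eqP: fN0; apply.
apply: idem_in_jacobson_eq0 => //.
have U_1 : is_unit (- 1 : R) by apply/is_unitN/is_unit_involutive; rewrite mulr1.
have J2 := in_jacobsonN (J_star_clean_unit_subr1 U_1).
have -> : f = (u - 1) + (v - 1) + - (- 1 - 1).
  by rewrite def_f opprB opprK !addrA subrK addrAC subrK.
apply: in_jacobsonD J2.
exact: in_jacobsonD (J_star_clean_unit_subr1 Uu) (J_star_clean_unit_subr1 Uv).
Qed.

End JStarClean.

Lemma star_clean_no_idem_sum_J_star_clean (R : pzRingType) (star : R -> R) :
  involution star -> strongly_star_clean star ->
  no_nonzero_idem_sum_two_units R -> strongly_J_star_clean star.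
Proof.
move=> star_inv clean no_idem a.
have idem_central := idem_projection_central star_inv
  (star_clean_idem_projection star_inv clean).
have [e [u [proj_e Uu def_e eu]]] := clean (a - 1).
have def_a : a = e + (u + 1) by rewrite addrA -def_e subrK.
exists e, (u + 1); split => //.
- exact: (unit_addr1_in_jacobson idem_central clean no_idem Uu).
- by rewrite def_a mulrDl mulrDr !mulrDl !mulrDr eu mul1r mulr1.
Qed.

Theorem corollary2p7 (R : pzRingType) (star : R -> R) :
  involution star ->
  (strongly_J_star_clean star <->
   strongly_star_clean star /\ no_nonzero_idem_sum_two_units R).
Proof.
move=> star_inv; split.
- move=> Jclean; split.
  + exact: J_star_clean_star_clean.
  + exact: J_star_clean_no_idem_sum_two_units.
- by case; apply: star_clean_no_idem_sum_J_star_clean.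
Qed.
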